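(* Let $H$ be a multi-hypergraph, $\mathcal{M}$ a matroid and $\gamma\colon E(H)\to E(\mathcal{M})$. Let $M$ be a maximal independent matching in $(H,\gamma)$ of size $\ell$, and suppose there exists $e\in E(H)$ with $\gamma(e)\notin\mathrm{span}(\gamma(M))$. Then there exist an integer $k>0$ and a collection $X\subseteq E(H)$ of $k+1$ hyperedges such that the subhypergraph of $H$ formed by the hyperedges in $X$ and their vertices is connected, and $H-V(X)$ (with the labelling $\gamma$ restricted to its hyperedges) contains a maximal independent matching of size $\ell-k$.
   Context: A multi-hypergraph $H=(V,E)$ consists of a finite set $V$ and a multiset $E$ of non-empty subsets of $V$ (hyperedges); distinct copies of the same subset are distinct hyperedges and may receive different labels. For $U\subseteq V(H)$, $H-U$ has vertex set $V(H)\setminus U$ and all hyperedges of $H$ disjoint from $U$. For $X\subseteq E(H)$, $V(X)=\bigcup_{e\in X}e$. A multi-hypergraph is connected if for every partition of its vertex set into non-empty parts $A,B$ some hyperedge meets both $A$ and $B$. $\mathrm{span}$ denotes the closure operator of the matroid $\mathcal{M}$. Given $\gamma\colon E(H)\to E(\mathcal{M})$, an independent matching in $(H,\gamma)$ is a collection $M$ of pairwise vertex-disjoint hyperedges of $H$ with pairwise distinct labels such that $\gamma(M)$ is an independent set of $\mathcal{M}$ (the empty collection is an independent matching). An independent matching $M$ is inclusion-wise maximal if no independent matching $M'$ satisfies $M\subsetneq M'$. It is maximal if there is no independent matching $M'$ in $(H,\gamma)$ with $\mathrm{span}(\gamma(M'))=\mathrm{span}(\gamma(M))$ that is not inclusion-wise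 maximal. *)

From mathcomp Require Import all_boot.
Set Implicit Arguments. Unset Strict Implicit. Unset Printing Implicit Defensive.

Record is_matroid (S : finType) (indep : {set S} -> bool) : Prop := {
  matroid_indep0 : indep set0;
  matroid_hered : forall A B : {set S}, A \subset B -> indep B -> indep A;
  matroid_exch : forall A B : {set S}, indep A -> indep B -> #|A| < #|B| ->
     exists2 x, x \in B :\: A & indep (x |: A)
}.

Definition mrank (S : finType) (indep : {set S} -> bool) (A : {set S}) : nat :=
  \max_(B in powerset A | indep B) #|B|.

Definition span (S : finType) (indep : {set S} -> bool) (A : {set S}) : {set S} :=
  [set x | mrank indep (x |: A) == mrank indep A].

(* A multi-hypergraph: vertex type V, hyperedge index type E (distinct indices
   may carry the same vertex set), incidence inc : E -> {set V}. *)

Definition Vof (V E : finType) (inc : E -> {set V}) (X : {set E}) : {set V} :=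
  \bigcup_(e in X) inc e.

Definition del_edges (V E : finType) (inc : E -> {set V}) (U : {set V}) : {set E} :=
  [set e | [disjoint inc e & U]].

Definition indep_matching (V E S : finType) (inc : E -> {set V})
  (indep : {set S} -> bool) (gamma : E -> S) (D : {set E}) (M : {set E}) : Prop :=
  [/\ M \subset D,
      (forall e f, e \in M -> f \in M -> e != f -> [disjoint inc e & inc f]),
      {in M &, injective gamma} &
      indep (gamma @: M)].

Definition incl_maximal (V E S : finType) (inc : E -> {set V})
  (indep : {set S} -> bool) (gamma : E -> S) (D : {set E}) (M : {set E}) : Prop :=
  indep_matching inc indep gamma D M /\
  forall M', indep_matching inc indep gamma D M' -> ~ (M \proper M').

Definition maximal_matching (V E S : finType) (inc : E -> {set V})
  (indep : {set S} -> bool) (gamma : E -> S) (D : {set E}) (M : {set E}) : Prop :=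
  indep_matching inc indep gamma D M /\
  forall M', indep_matching inc indep gamma D M' ->
    span indep (gamma @: M') = span indep (gamma @: M) ->
    incl_maximal inc indep gamma D M'.

Definition connected_hg (V E : finType) (inc : E -> {set V}) (W : {set V}) (X : {set E}) : Prop :=
  forall A B : {set V}, A != set0 -> B != set0 -> [disjoint A & B] -> A :|: B = W ->
    exists2 e, e \in X & (inc e :&: A != set0) && (inc e :&: B != set0).

From mathcomp Require Import all_boot.
From Stdlib Require Import Classical_Prop.
Set Implicit Arguments. Unset Strict Implicit. Unset Printing Implicit Defensive.

(* Every independent matching with the same span as M is maximal, because M is.
   Among them choose P with the fewest hyperedges meeting e, and let X' be those
   hyperedges. X' is nonempty, otherwise P + e would extend P; X = e + X' is a
   star around e, hence connected; and M' = P - X' lives in H - V(X). If an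
   independent matching N of H - V(X) spanning like M' could be extended by some
   f, then N + X' would again span like M and be disjoint from f, so gamma f lies
   in its span; a basis exchange then trades an edge of X' for f, producing a
   matching spanning like M with fewer hyperedges meeting e. *)

Lemma ex_minimizer (T : Type) (P : T -> Prop) (f : T -> nat) (x0 : T) :
  P x0 -> exists2 x, P x & forall y, P y -> f x <= f y.
Proof.
have [n] := ubnP (f x0); elim: n x0 => // n IH x0 ltx0n Px0.
case: (classic (exists2 y, P y & f y < f x0)) => [[y Py ltyx0] | noless].
  by apply: (IH y) => //; apply: leq_trans ltyx0 _; rewrite -ltnS.
exists x0 => // y Py; rewrite leqNgt; apply/negP => ltyx0.
by apply: noless; exists y.
Qed.

Section Matroid.

Variables (S : finType) (indep : {set S} -> bool).
Hypothesis hmat : is_matroid indep.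

Lemma indepS (A B : {set S}) : A \subset B -> indep B -> indep A.
Proof. exact: matroid_hered. Qed.

Lemma mrank_le_card (A : {set S}) : mrank indep A <= #|A|.
Proof. by apply/bigmax_leqP => B /andP[]; rewrite powersetE => /subset_leq_card. Qed.

Lemma mrank_ge_card (A B : {set S}) : B \subset A -> indep B -> #|B| <= mrank indep A.
Proof. by move=> sBA iB; apply: leq_bigmax_cond; rewrite powersetE sBA. Qed.

Lemma mrank_indep (A : {set S}) : indep A -> mrank indep A = #|A|.
Proof. by move=> iA; apply/eqP; rewrite eqn_leq mrank_le_card mrank_ge_card. Qed.

Lemma mrank_eq_card (A : {set S}) : mrank indep A = #|A| -> indep A.
Proof.
have : 0 < #|[pred B | (B \in powerset A) && indep B]|.
  by apply/card_gt0P; exists set0; rewrite inE powersetE sub0set (matroid_indep0 hmat).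
case/(eq_bigmax_cond (fun B : {set S} => #|B|)) => B; rewrite inE powersetE => /andP[sBA iB].
rewrite /mrank => -> cardB.
suff <- : B = A by [].
by apply/eqP; rewrite eqEcard sBA /= (eq_leq (esym cardB)).
Qed.

Lemma subset_span (A : {set S}) : A \subset span indep A.
Proof. by apply/subsetP => x xA; rewrite inE (setUidPr _) ?sub1set. Qed.

Lemma mem_span (A : {set S}) x : x \in A -> x \in span indep A.
Proof. exact: (subsetP (subset_span A)). Qed.

Lemma span_notin (A : {set S}) x : x \notin span indep A -> x \notin A.
Proof. exact/contra/mem_span. Qed.

Lemma mem_span_indep (I : {set S}) x :
  indep I -> (x \in span indep I) = (x \in I) || ~~ indep (x |: I).
Proof.
move=> iI; have [xI | xNI] /= := boolP (x \in I).
  exact: mem_span.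
have card_xI : #|x |: I| = #|I|.+1 by rewrite cardsU1 xNI.
rewrite inE (mrank_indep iI); apply/eqP/idP => [rank_xI | /negP dep_xI].
  apply/negP => ixI; move: rank_xI; rewrite (mrank_indep ixI) card_xI.
  by move/eqP; rewrite eqn_leq ltnn.
have := mrank_le_card (x |: I); rewrite card_xI leq_eqVlt ltnS.
case/orP => [/eqP rank_full | rank_le].
  by case: dep_xI; apply: mrank_eq_card; rewrite rank_full card_xI.
by apply/eqP; rewrite eqn_leq rank_le mrank_ge_card ?subsetUr.
Qed.

Lemma indep_setU1 (I : {set S}) x : indep I -> x \notin span indep I -> indep (x |: I).
Proof. by move=> iI; rewrite mem_span_indep // negb_or negbK => /andP[]. Qed.

Lemma span_subset (A B : {set S}) :
  A \subset B -> indep B -> span indep A \subset span indep B.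
Proof.
move=> sAB iB; have iA := indepS sAB iB.
apply/subsetP => x; rewrite !mem_span_indep // => /orP[xA | dep_xA].
  by rewrite (subsetP sAB).
by apply/orP; right; apply: contra dep_xA; apply: indepS; apply: setUS.
Qed.

Lemma card_le_span (I J : {set S}) :
  indep I -> indep J -> J \subset span indep I -> #|J| <= #|I|.
Proof.
move=> iI iJ sJI; rewrite leqNgt; apply/negP => ltIJ.
have [x /setDP[xJ xNI] ixI] := matroid_exch hmat iI iJ ltIJ.
by move: (subsetP sJI x xJ); rewrite mem_span_indep // (negbTE xNI) ixI.
Qed.

Lemma card_eq_span (I J : {set S}) :
  indep I -> indep J -> span indep I = span indep J -> #|I| = #|J|.
Proof.
move=> iI iJ eqIJ; apply/eqP; rewrite eqn_leq !card_le_span //.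
  by rewrite eqIJ subset_span.
by rewrite -eqIJ subset_span.
Qed.

Lemma span_sub_card (I J : {set S}) : indep I -> indep J ->
  J \subset span indep I -> #|I| <= #|J| -> span indep I \subset span indep J.
Proof.
move=> iI iJ sJI leIJ; apply/subsetP => x xI; apply/negPn/negP => xNJ.
have sxJI : x |: J \subset span indep I by rewrite subUset sub1set xI sJI.
have := card_le_span iI (indep_setU1 iJ xNJ) sxJI.
by rewrite cardsU1 (span_notin xNJ) add1n ltnNge leIJ.
Qed.

Lemma eq_span_card (I J : {set S}) : indep I -> indep J ->
  J \subset span indep I -> #|I| <= #|J| -> span indep I = span indep J.
Proof.
move=> iI iJ sJI leIJ; have sIJ := span_sub_card iI iJ sJI leIJ.
apply/eqP; rewrite eqEsubset sIJ span_sub_card //.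
  exact: subset_trans (subset_span I) sIJ.
exact: card_le_span.
Qed.

Lemma augment (C K : {set S}) : indep C -> indep K ->
  exists2 C', indep C' & [/\ C \subset C', C' \subset C :|: K & #|K| <= #|C'|].
Proof.
have [n] := ubnP (#|K| - #|C|); elim: n C => // n IH C ltn iC iK.
have [leKC | ltCK] := leqP #|K| #|C|; first by exists C; rewrite ?subsetUl.
have [x /setDP[xK xNC] ixC] := matroid_exch hmat iC iK ltCK.
have ltn' : #|K| - #|x |: C| < n.
  by rewrite cardsU1 xNC add1n subnS -ltnS prednK ?subn_gt0.
have [C' iC' [sxCC' sC'xCK leKC']] := IH _ ltn' ixC iK.
exists C' => //; split => //; first exact: subset_trans (subsetUr _ _) sxCC'.
by apply: subset_trans sC'xCK _; rewrite -setUA subUset sub1set inE xK orbT subxx.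
Qed.

Lemma basis_exchange (K N : {set S}) y :
  indep K -> N \subset K -> y \in span indep K -> y \notin span indep N ->
  exists z, [/\ z \in K :\: N, y \notin K :\ z, indep (y |: (K :\ z)) &
                span indep (y |: (K :\ z)) = span indep K].
Proof.
move=> iK sNK yK yNN; have iN := indepS sNK iK.
have [yinK | yNK] := boolP (y \in K).
  by exists y; rewrite setD1K // !inE eqxx (span_notin yNN) yinK; split.
have dep_yK : ~~ indep (y |: K) by move: yK; rewrite mem_span_indep // (negbTE yNK).
have [C iC [syNC sCyNK leKC]] := augment (indep_setU1 iN yNN) iK.
have sCyK : C \subset y |: K by apply: subset_trans sCyNK _; rewrite -setUA (setUidPr sNK).
have [z] : exists z, z \in (y |: K) :\: C.
  apply/set0Pn; rewrite setD_eq0; apply: contraNN dep_yK => syKC.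
  exact: indepS syKC iC.
case/setDP => /setU1P[-> | zK] zNC.
  by case/negP: zNC; apply: (subsetP syNC); rewrite setU11.
have zNN : z \notin N by apply: contra zNC => zN; apply: (subsetP syNC); rewrite setU1r.
have yNKz : y \notin K :\ z by rewrite inE negb_and yNK orbT.
have sCyKz : C \subset y |: (K :\ z).
  apply/subsetP => w wC; have := subsetP sCyK w wC; rewrite !inE.
  case/orP => [-> // | wK]; rewrite wK andbT; apply/orP; right.
  by apply: contraNneq zNC => <-.
have eqC : C = y |: (K :\ z).
  apply/eqP; rewrite eqEcard sCyKz (leq_trans _ leKC) //.
  by rewrite cardsU1 yNKz (cardsD1 z K) zK.
exists z; split; rewrite -?eqC //; first by rewrite inE zNN zK.
apply/esym/eq_span_card; rewrite -?eqC //.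
rewrite eqC subUset sub1set yK.
exact: subset_trans (subsetDl K [set z]) (subset_span K).
Qed.

Lemma span_setU1_eq (I J : {set S}) y :
  indep I -> indep J -> span indep I = span indep J -> y \notin span indep I ->
  indep (y |: J) /\ span indep (y |: I) = span indep (y |: J).
Proof.
move=> iI iJ eqIJ yNI; have yNJ : y \notin span indep J by rewrite -eqIJ.
have iyI := indep_setU1 iI yNI; have iyJ := indep_setU1 iJ yNJ.
split => //; apply: eq_span_card => //.
  rewrite subUset sub1set mem_span ?setU11 //.
  apply: subset_trans (subset_span J) _; rewrite -eqIJ.
  exact: span_subset (subsetUr _ _) iyI.
by rewrite !cardsU1 (span_notin yNI) (span_notin yNJ) (card_eq_span iI iJ eqIJ).
Qed.

Lemma disjoint_span (I Z : {set S}) :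
  indep (I :|: Z) -> [disjoint I & Z] -> [disjoint span indep I & Z].
Proof.
move=> iIZ dIZ; have iI := indepS (subsetUl I Z) iIZ.
rewrite disjoint_sym disjoints_subset; apply/subsetP => z zZ.
rewrite inE mem_span_indep // (disjointFl dIZ zZ) negbK.
by apply: indepS iIZ; rewrite subUset sub1set inE zZ orbT subsetUl.
Qed.

Lemma span_setU_eq (I J Z : {set S}) :
  indep I -> indep J -> span indep I = span indep J ->
  indep (I :|: Z) -> [disjoint I & Z] ->
  indep (J :|: Z) /\ span indep (I :|: Z) = span indep (J :|: Z).
Proof.
move=> iI iJ eqIJ; have [n] := ubnP #|Z|; elim: n Z => // n IH Z ltZn iIZ dIZ.
have [-> | [y yZ]] := set_0Vmem Z; first by rewrite !setU0.
have sZ0Z : Z :\ y \subset Z := subsetDl Z [set y].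
have iIZ0 : indep (I :|: Z :\ y) := indepS (setUS I sZ0Z) iIZ.
have [iJZ0 eqIJZ0] : indep (J :|: Z :\ y) /\
                     span indep (I :|: Z :\ y) = span indep (J :|: Z :\ y).
  apply: IH => //; last exact: disjointWr sZ0Z dIZ.
  by move: ltZn; rewrite (cardsD1 y Z) yZ.
have eqZ : Z = y |: (Z :\ y) by rewrite setD1K.
have yNIZ0 : y \notin span indep (I :|: Z :\ y).
  rewrite (disjointFl (disjoint_span (Z := [set y]) _ _) (set11 y)) //.
    by rewrite -setUA (setUC (Z :\ y)) -eqZ.
  by rewrite disjoint_sym disjoints1 !inE eqxx (disjointFl dIZ yZ).
by rewrite eqZ (setUCA J) (setUCA I); apply: span_setU1_eq.
Qed.

End Matroid.

Lemma inj_setU (aT rT : finType) (g : aT -> rT) (A B : {set aT}) :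
  {in A &, injective g} -> {in B &, injective g} -> [disjoint g @: A & g @: B] ->
  {in A :|: B &, injective g}.
Proof.
move=> injA injB dAB x y /setUP[xA | xB] /setUP[yA | yB] gxy.
- exact: injA.
- by move: (disjointFr dAB (imset_f g xA)); rewrite gxy imset_f.
- by move: (disjointFr dAB (imset_f g yA)); rewrite -gxy imset_f.
- exact: injB.
Qed.

Lemma inj_setU1 (aT rT : finType) (g : aT -> rT) (B : {set aT}) x :
  {in B &, injective g} -> g x \notin g @: B -> {in x |: B &, injective g}.
Proof.
move=> injB gxNB; apply: inj_setU => //; first by move=> ? ? /set1P-> /set1P->.
by rewrite imset_set1 disjoints1.
Qed.

Lemma imset_setD1 (aT rT : finType) (g : aT -> rT) (A : {set aT}) x :
  {in A &, injective g} -> x \in A -> g @: (A :\ x) = g @: A :\ g x.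
Proof.
move=> injA xA; apply/setP => y; rewrite !inE.
apply/imsetP/andP => [[u /setD1P[ux uA] ->] | [ygx /imsetP[u uA yu]]].
  split; last exact: imset_f.
  by apply: contra ux => /eqP gux; apply/eqP; apply: injA.
by exists u; rewrite // !inE uA andbT; apply: contraNneq ygx => ux; rewrite yu ux.
Qed.

Lemma disjoint_imset_in (aT rT : finType) (g : aT -> rT) (A B : {set aT}) :
  {in A :|: B &, injective g} -> [disjoint A & B] -> [disjoint g @: A & g @: B].
Proof.
move=> injAB dAB; rewrite disjoints_subset; apply/subsetP => _ /imsetP[a aA ->].
rewrite inE; apply/imsetP => -[b bB gab].
have eqab : a = b by apply: injAB; rewrite // inE ?aA ?bB ?orbT.
by move: (disjointFr dAB aA); rewrite eqab bB.
Qed.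

Section Hypergraph.

Variables (V E : finType) (inc : E -> {set V}).

Definition matching (Q : {set E}) :=
  {in Q &, forall e f, e != f -> [disjoint inc e & inc f]}.

Lemma matchingU (A B : {set E}) : matching A -> matching B ->
  {in A & B, forall a b, [disjoint inc a & inc b]} -> matching (A :|: B).
Proof.
move=> mA mB dAB x y /setUP[xA | xB] /setUP[yA | yB] nxy.
- exact: mA.
- exact: dAB.
- by rewrite disjoint_sym dAB.
- exact: mB.
Qed.

Lemma matchingU1 (B : {set E}) f : matching B ->
  {in B, forall b, [disjoint inc f & inc b]} -> matching (f |: B).
Proof.
move=> mB dfB; apply: matchingU => //; last by move=> ? b /set1P-> bB; apply: dfB.
by move=> ? ? /set1P-> /set1P->; rewrite eqxx.
Qed.

Lemma disjoint_del_edges (X : {set E}) d x :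
  d \in del_edges inc (Vof inc X) -> x \in X -> [disjoint inc d & inc x].
Proof. by rewrite inE => dX xX; apply: disjointWr dX; apply: bigcup_sup. Qed.

Lemma connected_star e (X : {set E}) :
  {in X, forall x, ~~ [disjoint inc x & inc e]} ->
  connected_hg inc (Vof inc (e |: X)) (e |: X).
Proof.
move=> meet A B A0 B0 dAB covAB.
wlog eB : A B A0 B0 dAB covAB / inc e :&: B = set0 => [hw |].
  have [eB | eBN] := eqVneq (inc e :&: B) set0; first exact: hw.
  have [eA | eAN] := eqVneq (inc e :&: A) set0; last by exists e; rewrite ?setU11 ?eAN ?eBN.
  have dBA : [disjoint B & A] by rewrite disjoint_sym.
  have covBA : B :|: A = Vof inc (e |: X) by rewrite setUC.
  have [x xX /andP[xB xA]] := hw B A B0 A0 dBA covBA eA.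
  by exists x; rewrite // xA xB.
have [v vB] := set0Pn _ B0.
have : v \in Vof inc (e |: X) by rewrite -covAB inE vB orbT.
case/bigcupP => x /setU1P[-> | xX] vx.
  by move/setP: eB => /(_ v); rewrite !inE vx vB.
have := meet x xX; rewrite -setI_eq0 => /set0Pn[u /setIP[ux ue]].
have uA : u \in A.
  have : u \in A :|: B by rewrite covAB; apply/bigcupP; exists e; rewrite ?setU11.
  by case/setUP => // uB; move/setP: eB => /(_ u); rewrite !inE ue uB.
exists x; first by rewrite setU1r.
by apply/andP; split; apply/set0Pn; [exists u | exists v]; rewrite inE ?ux ?uA ?vx ?vB.
Qed.

End Hypergraph.

Section IndependentMatching.

Variables (V E S : finType) (inc : E -> {set V}) (indep : {set S} -> bool) (gamma : E -> S).
Hypothesis hmat : is_matroid indep.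

Local Notation imatching := (indep_matching inc indep gamma).

Lemma indep_matching_sub (D D' P P' : {set E}) :
  P' \subset P -> P' \subset D' -> imatching D P -> imatching D' P'.
Proof.
move=> sP'P sP'D' [_ mP injP iP]; split => //.
- by move=> x y xP yP; apply: mP; apply: (subsetP sP'P).
- by move=> x y xP yP; apply: injP; apply: (subsetP sP'P).
- exact: (indepS hmat (imsetS gamma sP'P) iP).
Qed.

Lemma indep_matchingU1 (D P : {set E}) f :
  imatching D P -> f \in D -> gamma f \notin span indep (gamma @: P) ->
  {in P, forall p, [disjoint inc f & inc p]} -> imatching D (f |: P).
Proof.
move=> [sPD mP injP iP] fD fNP dfP; split.
- by rewrite subUset sub1set fD.
- exact: matchingU1.
- exact: inj_setU1 (span_notin fNP).
- by rewrite imsetU1 indep_setU1.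
Qed.

Lemma notin_span_indep_matching (D N N' : {set E}) f :
  imatching D N' -> N \subset N' -> f \in N' :\: N ->
  gamma f \notin span indep (gamma @: N).
Proof.
move=> [_ _ injN' iN'] sNN' /setDP[fN' fNN].
have iN := indepS hmat (imsetS gamma sNN') iN'.
rewrite mem_span_indep // negb_or negbK; apply/andP; split.
  apply/imsetP => -[n nN gfn]; move: fNN.
  by rewrite (injN' f n fN' (subsetP sNN' n nN) gfn) nN.
by rewrite -imsetU1; apply: (indepS hmat _ iN'); apply: imsetS; rewrite subUset sub1set fN'.
Qed.

Lemma card_indep_matching_span (D D' P Q : {set E}) :
  imatching D P -> imatching D' Q -> span indep (gamma @: P) = span indep (gamma @: Q) ->
  #|P| = #|Q|.
Proof.
move=> [_ _ injP iP] [_ _ injQ iQ] eqPQ.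
by rewrite -(card_in_imset injP) -(card_in_imset injQ) (card_eq_span hmat iP iQ eqPQ).
Qed.

End IndependentMatching.

Section Reduction.

Variables (V E S : finType) (inc : E -> {set V}) (indep : {set S} -> bool) (gamma : E -> S).
Hypotheses (hne : forall e, inc e != set0) (hmat : is_matroid indep).
Variables (M : {set E}) (e : E).
Hypotheses (hM : maximal_matching inc indep gamma [set: E] M)
           (heM : gamma e \notin span indep (gamma @: M)).

Local Notation imatching := (indep_matching inc indep gamma).

Definition equispan_matching (P : {set E}) :=
  imatching [set: E] P /\ span indep (gamma @: P) = span indep (gamma @: M).

Definition hits (P : {set E}) := [set p in P | ~~ [disjoint inc p & inc e]].

Lemma equispan_card (P : {set E}) : equispan_matching P -> #|P| = #|M|.
Proof. by case=> iP spP; exact: (card_indep_matching_span hmat iP hM.1 spP). Qed.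

Lemma equispan_blocked (P : {set E}) x : equispan_matching P ->
  gamma x \notin span indep (gamma @: P) -> exists2 p, p \in P & ~~ [disjoint inc x & inc p].
Proof.
move=> [iP spP] xNP; apply: NNPP => free.
have [_ maxP] := hM.2 P iP spP; apply: (maxP (x |: P)).
  apply: indep_matchingU1 => // p pP.
  by apply/negPn/negP => meet; apply: free; exists p.
apply/properP; split; first exact: subsetUr.
exists x; first exact: setU11.
by apply: contra xNP => xP; apply: mem_span; apply: imset_f.
Qed.

Lemma exists_min_hits : exists2 P, equispan_matching P &
  forall P', equispan_matching P' -> #|hits P| <= #|hits P'|.
Proof. by apply: ex_minimizer; split; first exact: hM.1. Qed.

Variable P : {set E}.
Hypotheses (hP : equispan_matching P)
           (Pmin : forall P', equispan_matching P' -> #|hits P| <= #|hits P'|).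

Local Notation X := (e |: hits P).
Local Notation D := (del_edges inc (Vof inc X)).
Local Notation M0 := (P :\: hits P).

Lemma gamma_e_notin_span : gamma e \notin span indep (gamma @: P).
Proof. by case: hP => _ ->. Qed.

Lemma e_notin_hits : e \notin hits P.
Proof.
apply: contra gamma_e_notin_span => /setIdP[eP _].
by apply: mem_span; apply: imset_f.
Qed.

Lemma hits_subset : hits P \subset P.
Proof. by apply/subsetP => p /setIdP[]. Qed.

Lemma hits_gt0 : 0 < #|hits P|.
Proof.
have [p pP meet] := equispan_blocked hP gamma_e_notin_span.
by apply/card_gt0P; exists p; rewrite inE pP disjoint_sym.
Qed.

Lemma del_edges_notin_star d : d \in D -> d \notin X.
Proof.
move=> dD; apply/negP => dX; have := disjoint_del_edges dD dX.
by rewrite -setI_eq0 setIid (negbTE (hne d)).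
Qed.

Lemma hits_subsetI (Q : {set E}) : Q \subset D :|: hits P -> hits Q \subset Q :&: hits P.
Proof.
move=> sQ; apply/subsetP => q /setIdP[qQ meet]; rewrite inE qQ /=.
case/setUP: (subsetP sQ q qQ) => // qD.
by rewrite (disjoint_del_edges qD (setU11 e _)) in meet.
Qed.

Lemma indep_matching_setD_hits : imatching D M0.
Proof.
apply: (indep_matching_sub hmat _ _ hP.1); first exact: subsetDl.
apply/subsetP => p /setDP[pP pNH]; rewrite inE.
apply/bigcup_disjointP => x /setU1P[-> | xH].
  by move: pNH; rewrite inE pP /= negbK.
case: hP => [[_ mP _ _] _]; apply: mP => //; first exact: (subsetP hits_subset).
by apply: contraNneq pNH => ->.
Qed.

Lemma card_setD_hits : #|M0| + #|hits P| = #|M|.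
Proof.
by rewrite -(equispan_card hP) -(cardsID (hits P) P) (setIidPr hits_subset) addnC.
Qed.

Lemma equispan_setU_hits (N : {set E}) : imatching D N ->
  span indep (gamma @: N) = span indep (gamma @: M0) -> equispan_matching (N :|: hits P).
Proof.
move=> [sND mN injN iN] spN.
have [[_ _ injP iP] spP] := hP.
have [_ mH injH _] := indep_matching_sub hmat hits_subset (subsetT _) hP.1.
have [_ _ _ iM0] := indep_matching_setD_hits.
have eqP : M0 :|: hits P = P by rewrite setUC -{1}(setIidPr hits_subset) setID.
have dM0H : [disjoint gamma @: M0 & gamma @: hits P].
  by apply: disjoint_imset_in; rewrite ?eqP // disjoints_subset subsetDr.
have iPU : indep (gamma @: M0 :|: gamma @: hits P) by rewrite -imsetU eqP.
have [iNH spNH] := span_setU_eq hmat iM0 iN (esym spN) iPU dM0H.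
have dNH : [disjoint gamma @: N & gamma @: hits P].
  apply: disjointWl (disjoint_span hmat iPU dM0H).
  by rewrite -spN; apply: subset_span.
split; last by rewrite imsetU -spNH -imsetU eqP.
split; [exact: subsetT | apply: matchingU | exact: inj_setU | by rewrite imsetU] => //.
by move=> n h nN hH; apply: disjoint_del_edges (subsetP sND n nN) (setU1r e hH).
Qed.

Lemma mem_span_setI_del_edges (Q : {set E}) f :
  equispan_matching Q -> Q \subset D :|: hits P -> f \in D ->
  {in Q, forall q, [disjoint inc f & inc q]} -> gamma f \in span indep (gamma @: (Q :&: D)).
Proof.
move=> hQ sQ fD dfQ.
have fQ : gamma f \in span indep (gamma @: Q).
  apply: contraT => fNQ; have [q qQ] := equispan_blocked hQ fNQ.
  by rewrite (dfQ q qQ).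
have [[_ mQ injQ iQ] spQ] := hQ.
(* Otherwise exchange f against an edge g of hits P, contradicting minimality. *)
apply: contraT => fNQD.
have [z [/setDP[zQ zNQD] fNQz ifQz spfQz]] :=
  basis_exchange hmat iQ (imsetS gamma (subsetIl Q D)) fQ fNQD.
have [g gQ zg] := imsetP zQ.
have gH : g \in hits P.
  case/setUP: (subsetP sQ g gQ) => // gD.
  by move: zNQD; rewrite zg imset_f // inE gQ gD.
have gNf : g != f by apply: contraNneq (del_edges_notin_star fD) => <-; exact: setU1r.
set P2 := f |: (Q :\ g).
have gP2 : gamma @: P2 = gamma f |: (gamma @: Q :\ z).
  by rewrite imsetU1 zg imset_setD1.
have hP2 : equispan_matching P2.
  split; last by rewrite gP2 spfQz spQ.
  split; [exact: subsetT | | | by rewrite gP2].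
  - apply: matchingU1 => [|q /setD1P[_ qQ]]; last exact: dfQ.
    by move=> a b /setD1P[_ aQ] /setD1P[_ bQ]; apply: mQ.
  - apply: inj_setU1; first by move=> a b /setD1P[_ aQ] /setD1P[_ bQ]; apply: injQ.
    by rewrite imset_setD1 // -zg.
have sP2 : P2 \subset D :|: hits P.
  by rewrite subUset sub1set inE fD (subset_trans (subsetDl _ _) sQ).
suff : #|hits P2| < #|hits P| by rewrite ltnNge (Pmin hP2).
rewrite (cardsD1 g (hits P)) gH add1n ltnS; apply: subset_leq_card.
apply/subsetP => p /(subsetP (hits_subsetI sP2)) /setIP[pP2 pH].
rewrite in_setD1 pH andbT; apply: contraTneq pP2 => ->.
by rewrite /P2 !inE eqxx (negbTE gNf).
Qed.

Lemma maximal_setD_hits : maximal_matching inc indep gamma D M0.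
Proof.
split; first exact: indep_matching_setD_hits.
move=> N iN spN; split => // N' iN' /properP[sNN' [f fN' fNN]].
have [sND _ _ iNg] := iN; have [sN'D mN' _ _] := iN'.
have fD : f \in D := subsetP sN'D f fN'.
have sQ : N :|: hits P \subset D :|: hits P by rewrite setSU.
have dfQ : {in N :|: hits P, forall q, [disjoint inc f & inc q]}.
  move=> q /setUP[qN | qH]; last exact: disjoint_del_edges fD (setU1r e qH).
  by apply: mN' => //; [exact: subsetP sNN' q qN | apply: contraNneq fNN => ->].
have sQDN : (N :|: hits P) :&: D \subset N.
  apply/subsetP => q /setIP[/setUP[// | qH] qD].
  by case/negP: (del_edges_notin_star qD); rewrite setU1r.
have := mem_span_setI_del_edges (equispan_setU_hits iN spN) sQ fD dfQ.
move/(subsetP (span_subset hmat (imsetS gamma sQDN) iNg)); apply/negP.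
have fN'N : f \in N' :\: N by rewrite inE fNN fN'.
exact: (notin_span_indep_matching hmat iN' sNN' fN'N).
Qed.

End Reduction.

Theorem lemma1 (V E S : finType) (inc : E -> {set V})
  (indep : {set S} -> bool) (gamma : E -> S)
  (hne : forall e, inc e != set0)
  (hmat : is_matroid indep)
  (M : {set E})
  (hM : maximal_matching inc indep gamma [set: E] M)
  (he : exists e : E, gamma e \notin span indep (gamma @: M)) :
  exists (k : nat) (X : {set E}),
    [/\ 0 < k, #|X| = k.+1, connected_hg inc (Vof inc X) X &
        exists M' : {set E},
          maximal_matching inc indep gamma (del_edges inc (Vof inc X)) M' /\
          #|M'| + k = #|M| ].
Proof.
have [e heM] := he.
have [P hP Pmin] := exists_min_hits e hM.
exists #|hits inc e P|, (e |: hits inc e P); split.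
- exact: (hits_gt0 hmat hM heM hP).
- by rewrite cardsU1 (e_notin_hits heM hP).
- by apply: connected_star => x /setIdP[_]; rewrite disjoint_sym.
- exists (P :\: hits inc e P); split; first exact: (maximal_setD_hits hne hmat hM hP Pmin).
  exact: (card_setD_hits hmat e hM hP).
Qed.
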